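(* There exist preference-based argumentation frameworks $AF_p=(AR,Attacks,Prefs)$ and $AF'_p=(AR',Attacks',Prefs')$ with $AF_p\preceq_{NP}AF'_p$ such that $\tau_{preferred}(AF'_p)\subseteq AR$ but $\tau_{preferred}(AF'_p)\neq\tau_{preferred}(AF_p)$.
   Context: A preference-based argumentation framework is a triple $(AR,Attacks,Prefs)$ where $AR$ is a finite set of arguments, $Attacks\subseteq AR\times AR$ (with $(b,a)\in Attacks$ read ''$b$ attacks $a$''), and $Prefs$ is a partial or total ordering on $AR$, written $a\succeq b$. The set of acceptable arguments is $\tau_{preferred}(AF_p)=\{a\in AR: \text{for every } b\in AR,\ (b,a)\in Attacks \text{ implies } a\succeq b\}$. $AF'_p=(AR',Attacks',Prefs')$ is a normal expansion of $AF_p=(AR,Attacks,Prefs)$, written $AF_p\preceq_{NP}AF'_p$, iff $AR\subseteq AR'$, $Attacks\subseteq Attacks'$, every $(a,b)\in Attacks'\setminus Attacks$ has $a\in AR'\setminus AR$ or $b\in AR'\setminus AR$, $Prefs\subseteq Prefs'$, and every $(a\succeq b)\in Prefs'\setminus Prefs$ has $a\in AR'\setminus AR$ or $b\in AR'\setminus AR$. *)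

From mathcomp Require Import all_boot all_order.
Set Implicit Arguments. Unset Strict Implicit. Unset Printing Implicit Defensive.

(* A preference-based argumentation framework over a finite universe T of
   possible arguments: AR is the (finite) set of arguments, Attacks a set of
   pairs (b,a) meaning "b attacks a", Prefs a set of pairs (a,b) meaning
   "a >= b". *)
Record PAF (T : finType) := mkPAF {
  AR : {set T};
  Attacks : {set T * T};
  Prefs : {set T * T}
}.

Definition pref_ge (T : finType) (F : PAF T) (a b : T) : bool := (a, b) \in Prefs F.

Definition wf_PAF (T : finType) (F : PAF T) : Prop :=
  [/\ (forall b a, (b, a) \in Attacks F -> (b \in AR F) && (a \in AR F)),
      (forall a b, pref_ge F a b -> (a \in AR F) && (b \in AR F)),
      (forall a, a \in AR F -> pref_ge F a a),
      (forall a b, pref_ge F a b -> pref_ge F b a -> a = b)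
    & (forall a b c, pref_ge F a b -> pref_ge F b c -> pref_ge F a c)].

Definition tau_preferred (T : finType) (F : PAF T) : {set T} :=
  [set a in AR F | [forall b in AR F, ((b, a) \in Attacks F) ==> pref_ge F a b]].

Definition normal_expansion (T : finType) (F F' : PAF T) : Prop :=
  [/\ AR F \subset AR F',
      Attacks F \subset Attacks F',
      (forall a b, (a, b) \in Attacks F' -> (a, b) \notin Attacks F ->
          (a \in AR F' :\: AR F) || (b \in AR F' :\: AR F)),
      Prefs F \subset Prefs F'
    & (forall a b, (a, b) \in Prefs F' -> (a, b) \notin Prefs F ->
          (a \in AR F' :\: AR F) || (b \in AR F' :\: AR F))].

From mathcomp Require Import all_boot all_order.

(* A lone unattacked argument is accepted.  Adding a newcomer that attacks it
   and is attacked back, incomparable to it under the discrete preference,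
   leaves neither argument accepted: the accepted set drops to the empty set,
   which lies inside the old arguments but differs from the old accepted set. *)

Set Implicit Arguments.
Unset Strict Implicit.
Unset Printing Implicit Defensive.

Section Acceptability.

Variables (T : finType) (F : PAF T).

Lemma tau_preferredP a :
  reflect (a \in AR F /\
           forall b, b \in AR F -> (b, a) \in Attacks F -> pref_ge F a b)
          (a \in tau_preferred F).
Proof.
rewrite inE; apply: (iffP andP) => -[aF accF]; split=> //.
- by move=> b bF baF; move/forall_inP/(_ b bF)/implyP: accF; apply.
- by apply/forall_inP => b bF; apply/implyP; apply: accF.
Qed.

Lemma unattacked_tau_preferred a :
  a \in AR F -> (forall b, (b, a) \notin Attacks F) -> a \in tau_preferred F.
Proof.
move=> aF unatt; apply/tau_preferredP; split=> // b _.
by rewrite (negbTE (unatt b)).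
Qed.

Lemma attacked_notin_tau_preferred a b :
  b \in AR F -> (b, a) \in Attacks F -> ~~ pref_ge F a b ->
  a \notin tau_preferred F.
Proof.
by move=> bF baF abF; apply/tau_preferredP => -[_ /(_ b bF baF)]; apply/negP.
Qed.

End Acceptability.

Section DiscretePreferences.

Variable T : finType.

Definition diag_prefs (A : {set T}) : {set T * T} := [set (x, x) | x in A].

Lemma mem_diag_prefs (A : {set T}) x y :
  ((x, y) \in diag_prefs A) = (x == y) && (x \in A).
Proof.
apply/imsetP/andP => [[z zA [-> ->]] | [/eqP <- xA]]; last by exists x.
by rewrite eqxx.
Qed.

Lemma wf_PAF_diag (A : {set T}) (Att : {set T * T}) :
  Att \subset setX A A -> wf_PAF (mkPAF A Att (diag_prefs A)).
Proof.
move=> /subsetP attA; rewrite /wf_PAF /pref_ge /=.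
split=> [b a /attA | a b | a aA | a b | a b c]; rewrite ?in_setX ?mem_diag_prefs //.
- by case/andP=> /eqP <- ->.
- by rewrite eqxx.
- by case/andP=> /eqP.
- by case/andP=> /eqP <- aA /andP[/eqP <- _]; rewrite eqxx.
Qed.

Lemma normal_expansion_diag (A A' : {set T}) (Att Att' : {set T * T}) :
  A \subset A' -> Att \subset Att' ->
  (forall a b, (a, b) \in Att' -> (a, b) \notin Att ->
     (a \in A' :\: A) || (b \in A' :\: A)) ->
  normal_expansion (mkPAF A Att (diag_prefs A)) (mkPAF A' Att' (diag_prefs A')).
Proof.
move=> AA' AttAtt' newAtt; split=> //= [|a b].
- by apply/subsetP => -[a b]; rewrite !mem_diag_prefs => /andP[-> /(subsetP AA')].
- rewrite !mem_diag_prefs => /andP[/eqP <- aA'] aNA.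
  by rewrite in_setD aA' andbT orbb; rewrite eqxx in aNA.
Qed.

End DiscretePreferences.

(* [true] is the original argument and [false] the newcomer. *)
Definition base_PAF : PAF bool := mkPAF [set true] set0 (diag_prefs [set true]).

Definition expanded_PAF : PAF bool :=
  mkPAF setT [set (true, false); (false, true)] (diag_prefs setT).

Lemma tau_preferred_base : tau_preferred base_PAF = [set true].
Proof.
apply/setP => x; rewrite in_set1; case: x.
  by rewrite unattacked_tau_preferred //= => [|b]; rewrite inE.
by apply/negbTE/negP => /tau_preferredP[]; rewrite inE.
Qed.

Lemma tau_preferred_expanded : tau_preferred expanded_PAF = set0.
Proof.
apply/setP => x; rewrite in_set0; apply/negbTE.
by apply: (@attacked_notin_tau_preferred _ _ _ (~~ x));
  rewrite /pref_ge /= ?mem_diag_prefs ?inE; case: x.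
Qed.

Theorem proposition49 :
  exists (T : finType) (F F' : PAF T),
    [/\ wf_PAF F, wf_PAF F', normal_expansion F F',
        tau_preferred F' \subset AR F
      & tau_preferred F' != tau_preferred F].
Proof.
exists bool, base_PAF, expanded_PAF.
rewrite tau_preferred_expanded tau_preferred_base sub0set eq_sym.
split=> //.
- by apply: wf_PAF_diag; rewrite sub0set.
- by apply: wf_PAF_diag; apply/subsetP => -[[] []]; rewrite !inE.
- apply: normal_expansion_diag; rewrite ?subsetT ?sub0set // => -[] [];
  by rewrite !inE.
- by apply/set0Pn; exists true; rewrite inE.
Qed.
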